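(* Let $Y=(\ell_2,|||\cdot|||)$ be the renorming of $\ell_2$ described in the context. Then $e_1$ and $e_1+e_n$ ($n\ge2$) are extreme points of $B_Y$, and $e_1^*$ and $e_1^*-2e_n^*$ ($n\ge2$) are extreme points of $B_{Y^*}$.
   Context: Let $(e_n)$ be the unit vector basis of $\ell_2$ and $(e_n^* )$ the biorthogonal functionals (identified with elements of $\ell_2$ via the standard duality). Define an equivalent norm $\|\cdot\|$ on $\ell_2$ whose unit ball is the $\|\cdot\|_2$-closed convex hull of $B_{\ell_2}\cup\{\pm(e_1+e_n):n\ge2\}$. For $x=\sum_n x_ne_n$ put $|||x|||=\max\{\|x\|,\sup_{n\ge2}|x_1-2x_n|\}$ and $Y=(\ell_2,|||\cdot|||)$; $Y^*$ carries the dual norm. *)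

(* Sequences x : nat -> R over R : realType.
   Index convention: the paper's e_k (k >= 1) is [unitv (k-1)], i.e. e_1 = unitv 0,
   and the paper's "n >= 2" becomes "(1 <= n)%N". *)
From mathcomp Require Import all_boot all_order all_algebra.
From mathcomp Require Import all_classical all_reals all_analysis.
Import Order.TTheory GRing.Theory Num.Theory.
Import numFieldNormedType.Exports.
Local Open Scope ring_scope.
Local Open Scope classical_set_scope.

Definition l2 (R : realType) : set (nat -> R) :=
  [set x : nat -> R | cvgn (series (fun n => x n ^+ 2))].

Definition l2norm (R : realType) (x : nat -> R) : R :=
  Num.sqrt (limn (series (fun n => x n ^+ 2))).

Definition unitv (R : realType) (i : nat) : nat -> R := fun k => (k == i)%:R.

Definition l2ball (R : realType) : set (nat -> R) :=
  [set x | l2 R x /\ l2norm R x <= 1].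

Definition conv (R : realType) (S : set (nat -> R)) : set (nat -> R) :=
  [set x | exists (m : nat) (lam : 'I_m -> R) (v : 'I_m -> nat -> R),
     (forall i, 0 <= lam i) /\ \sum_(i < m) lam i = 1 /\ (forall i, S (v i)) /\
     x = (fun k => \sum_(i < m) lam i * v i k)].

Definition cconv (R : realType) (S : set (nat -> R)) : set (nat -> R) :=
  [set x | l2 R x /\ forall e : R, 0 < e ->
     exists y, conv R S y /\ l2norm R (fun k => x k - y k) < e].

(* unit ball of the equivalent norm ||.|| :
   closed convex hull of B_{ell_2} u {+-(e_1 + e_n) : n >= 2} *)
Definition K0 (R : realType) : set (nat -> R) :=
  cconv R (l2ball R `|`
    [set x | exists n : nat, (1 <= n)%N /\
       (x = (fun k => unitv R 0 k + unitv R n k) \/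
        x = (fun k => - (unitv R 0 k + unitv R n k)))]).

(* ||x|| = Minkowski functional of K0 *)
Definition norm0 (R : realType) (x : nat -> R) : R :=
  inf [set t : R | 0 < t /\ K0 R (fun k => t^-1 * x k)].

Definition tnorm (R : realType) (x : nat -> R) : R :=
  Num.max (norm0 R x)
    (sup [set `|x 0%N - 2 * x n| | n in [set n : nat | (1 <= n)%N]]).

Definition BY (R : realType) : set (nat -> R) :=
  [set x | l2 R x /\ tnorm R x <= 1].

Definition pairing (R : realType) (f x : nat -> R) : R :=
  limn (series (fun k => f k * x k)).

(* dual norm on Y^* (Y^* identified with ell_2 via the standard duality) *)
Definition dualnorm (R : realType) (f : nat -> R) : R :=
  sup [set `|pairing R f x| | x in BY R].

Definition BYs (R : realType) : set (nat -> R) :=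
  [set f | l2 R f /\ dualnorm R f <= 1].

Definition extreme (R : realType) (C : set (nat -> R)) (x : nat -> R) : Prop :=
  C x /\ forall (y z : nat -> R) (t : R), C y -> C z -> 0 < t < 1 ->
    x = (fun k => t * y k + (1 - t) * z k) -> y = z.

(* The proof is coordinatewise.
   - Primal side: every x in B_Y has |x_1 - 2 x_n| <= 1 for n >= 2 and, as
     x_n -> 0, also |x_1| <= 1.  Conversely a generator of the unit ball K0 of
     ||.|| (a point of B_{l_2} or +-(e_1 + e_n)) obeying these bounds is in B_Y;
     in particular e_1 and e_1 + e_n are.
   - Dual side: by Jensen's inequality K0 is bounded in l_2, hence so is B_Y,
     so the pairing with a point of B_Y is bounded and |<f, x>| <= |||f|||_*.
     Testing f in B_{Y^*} against e_1 and e_1 + e_k bounds its coordinates.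
   - Extremality: if a point maximizes the first coordinate over a set and, on
     the face where that maximum is attained, dominates (or is dominated by)
     the other coordinates from a fixed side, it is extreme, because a proper
     convex combination can only attain a one-sided bound if both terms do. *)

From Pilot Require Import Defs.
From mathcomp Require Import all_boot all_order all_algebra.
From mathcomp Require Import all_classical all_reals all_analysis.
From mathcomp Require Import ring lra.
Import Order.TTheory GRing.Theory Num.Theory.
Import numFieldNormedType.Exports.
Local Open Scope ring_scope.
Local Open Scope classical_set_scope.

Local Notation sumsq u := (series (fun n => u n ^+ 2)).

Section SquareSums.
Context {R : realType}.
Implicit Types u v w : nat -> R.

Lemma series_ge0 {u} N : (forall k, 0 <= u k) -> 0 <= series u N.
Proof. by move=> u_ge0; rewrite /series /=; apply: sumr_ge0 => k _. Qed.

Lemma series_le_lim u : (forall k, 0 <= u k) -> cvgn (series u) ->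
  forall N, series u N <= limn (series u).
Proof.
move=> u_ge0 cv; apply: nondecreasing_cvgn_le => //.
by apply: nondecreasing_series => n _ _; exact: u_ge0.
Qed.

Lemma bounded_series_cvg {u M} : (forall k, 0 <= u k) ->
  (forall N, series u N <= M) -> cvgn (series u) /\ limn (series u) <= M.
Proof.
move=> u_ge0 uM.
have cv : cvgn (series u).
  apply: nondecreasing_is_cvgn.
    by apply: nondecreasing_series => n _ _; exact: u_ge0.
  by exists M => _ [n _ <-]; exact: uM.
split => //; apply: limr_le => //; near=> n; exact: uM.
Unshelve. all: by end_near.
Qed.

Lemma finite_support_series u K : (forall k, (K <= k)%N -> u k = 0) ->
  cvgn (series u) /\ limn (series u) = series u K.
Proof.
move=> u_out.
have ev : \forall N \near \oo, series u N = series u K.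
  exists K => // N /= KN.
  rewrite /series /= (big_cat_nat (leq0n K) KN) /=.
  rewrite [X in _ + X]big_nat_cond [X in _ + X]big1 ?addr0 //.
  by move=> k /andP[/andP[Kk _] _]; exact: u_out.
split; [exact: is_cvg_near_cst ev | exact: lim_near_cst ev].
Qed.

Lemma finite_support_l2 {v} K : (forall k, (K <= k)%N -> v k = 0) -> l2 R v.
Proof.
move=> v_out; have [] // := finite_support_series (fun n => v n ^+ 2) K.
by move=> k Kk; rewrite (v_out k Kk) expr0n.
Qed.

Lemma sum_delta (g : nat -> R) i N :
  \sum_(0 <= k < N) g k * (k == i)%:R = (i < N)%:R * g i.
Proof.
elim: N => [|N IH]; first by rewrite big_geq // mul0r.
rewrite big_nat_recr //= IH ltnS.
case: (eqVneq N i) => [->|ne].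
  by rewrite ltnn leqnn /= mul0r add0r mulr1 mul1r.
by rewrite [(i <= N)%N]leq_eqVlt eq_sym (negbTE ne) /= mulr0 addr0.
Qed.

Lemma unitv_diag i : unitv R i i = 1.
Proof. by rewrite /unitv eqxx. Qed.

Lemma unitv_out i k : (i < k)%N -> unitv R i k = 0.
Proof. by move=> ik; rewrite /unitv; case: eqVneq ik => // ->; rewrite ltnn. Qed.

Lemma sumsq_unitv i N : sumsq (unitv R i) N <= 1.
Proof.
rewrite /series /= (eq_bigr (fun k => 1 * (k == i)%:R)); last first.
  by move=> k _; rewrite /unitv mul1r; case: (k == i); rewrite ?expr1n ?expr0n.
by rewrite sum_delta mulr1; case: (i < N)%N; rewrite ?lexx ?ler01.
Qed.

Lemma sqrD_le (a b : R) : (a + b) ^+ 2 <= 2 * a ^+ 2 + 2 * b ^+ 2.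
Proof.
rewrite -subr_ge0 (_ : _ - _ = (a - b) ^+ 2); first exact: sqr_ge0.
by ring.
Qed.

Lemma sqrB_le (a b : R) : (a - b) ^+ 2 <= 2 * a ^+ 2 + 2 * b ^+ 2.
Proof. by have := sqrD_le a (- b); rewrite sqrrN. Qed.

Lemma sumsq_le2 u v w N : (forall k, w k ^+ 2 <= 2 * u k ^+ 2 + 2 * v k ^+ 2) ->
  sumsq w N <= 2 * sumsq u N + 2 * sumsq v N.
Proof.
move=> uvw; rewrite /series /= !mulr_sumr -big_split /=.
by apply: ler_sum => k _; exact: uvw.
Qed.

Lemma sumsq_scale (c : R) u N :
  series (fun k => (c * u k) ^+ 2) N = c ^+ 2 * sumsq u N.
Proof. by rewrite /series /= mulr_sumr; apply: eq_bigr => k _; rewrite exprMn. Qed.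

Lemma jensen_sqr m (lam a : 'I_m -> R) : (forall i, 0 <= lam i) ->
  \sum_i lam i = 1 -> (\sum_i lam i * a i) ^+ 2 <= \sum_i lam i * a i ^+ 2.
Proof.
move=> lam_ge0 lam_sum1; set c := \sum_i lam i * a i.
have : 0 <= \sum_i lam i * (a i - c) ^+ 2.
  by apply: sumr_ge0 => i _; apply: mulr_ge0 => //; exact: sqr_ge0.
rewrite (eq_bigr (fun i => lam i * a i ^+ 2 - (2 * c) * (lam i * a i) + c ^+ 2 * lam i));
  last by move=> i _; ring.
rewrite big_split big_split /= sumrN -!mulr_sumr -/c lam_sum1.
nra.
Qed.

Lemma conv_sumsq (S : set (nat -> R)) {C : R} {y} : Defs.conv R S y ->
  (forall v, S v -> forall N, sumsq v N <= C) -> forall N, sumsq y N <= C.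
Proof.
move=> [m [lam [v [lam_ge0 [lam_sum1 [Sv ->]]]]]] S_le N.
apply: (@le_trans _ _ (\sum_(0 <= k < N) \sum_(i < m) lam i * v i k ^+ 2)).
  by rewrite /series /=; apply: ler_sum => k _; exact: jensen_sqr.
rewrite exchange_big /=.
apply: (@le_trans _ _ (\sum_(i < m) lam i * C)); last by rewrite -mulr_suml lam_sum1 mul1r.
apply: ler_sum => i _; rewrite -mulr_sumr; apply: ler_wpM2l => //.
by have := S_le _ (Sv i) N; rewrite /series.
Qed.

Lemma sqrt_le1 (L : R) : (Num.sqrt L <= 1) = (L <= 1).
Proof. by rewrite -[X in _ <= X]sqrtr1 ler_sqrt. Qed.

Lemma sqrt_lt1 (L : R) : (Num.sqrt L < 1) = (L < 1).
Proof. by rewrite -[X in _ < X]sqrtr1 ltr_sqrt. Qed.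

Lemma sumsq_le_lim {x} : l2 R x -> forall N, sumsq x N <= limn (sumsq x).
Proof. by apply: series_le_lim => k; exact: sqr_ge0. Qed.

Lemma lim_sumsq_ge0 {x} : l2 R x -> 0 <= limn (sumsq x).
Proof.
move=> x_l2; apply: le_trans (sumsq_le_lim x_l2 0%N).
by apply: series_ge0 => k; exact: sqr_ge0.
Qed.

Lemma l2_coord_sqr {x} m : l2 R x -> x m ^+ 2 <= limn (sumsq x).
Proof.
move=> x_l2; apply: le_trans (sumsq_le_lim x_l2 m.+1).
rewrite /series /= big_nat_recr //= lerDr.
by apply: sumr_ge0 => k _; exact: sqr_ge0.
Qed.

Lemma l2_dominated {g x} w {C : R} : l2 R g -> (forall N, sumsq x N <= C) ->
  (forall k, w k ^+ 2 <= 2 * g k ^+ 2 + 2 * x k ^+ 2) ->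
  cvgn (sumsq w) /\ limn (sumsq w) <= 2 * limn (sumsq g) + 2 * C.
Proof.
move=> g_l2 x_le w_le; apply: bounded_series_cvg => [k|N]; first exact: sqr_ge0.
apply: le_trans (sumsq_le2 g x _ N w_le) _.
apply: lerD; rewrite ler_pM2l //.
exact: sumsq_le_lim.
Qed.

End SquareSums.

Section UnitBalls.
Context {R : realType}.
Implicit Types v w x y : nat -> R.

Definition ball_gens : set (nat -> R) := l2ball R `|`
  [set x | exists n : nat, (1 <= n)%N /\
     (x = (fun k => unitv R 0 k + unitv R n k) \/
      x = (fun k => - (unitv R 0 k + unitv R n k)))].

Lemma ball_gens_sumsq {v} : ball_gens v -> forall N, sumsq v N <= 4.
Proof.
case=> [[v_l2 v_le1]|[n [_ vE]]] N.
  rewrite /l2norm sqrt_le1 in v_le1.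
  by apply: le_trans (sumsq_le_lim v_l2 N) _; apply: le_trans v_le1 _; lra.
have v_le k : v k ^+ 2 <= 2 * unitv R 0 k ^+ 2 + 2 * unitv R n k ^+ 2.
  by case: vE => ->; rewrite /= ?sqrrN; exact: sqrD_le.
apply: le_trans (sumsq_le2 _ _ _ N v_le) _.
have := @sumsq_unitv R 0 N; have := @sumsq_unitv R n N; lra.
Qed.

Lemma gens_in_K0 {v} : l2 R v -> ball_gens v -> K0 R v.
Proof.
move=> v_l2 v_gen; split => // e e_gt0; exists v; split.
  exists 1%N, (fun=> 1), (fun=> v); split; first by move=> _; exact: ler01.
  split; first by rewrite big_ord1.
  split => //; apply/funext => k; by rewrite big_ord1 mul1r.
rewrite /l2norm (_ : (fun n => (v n - v n) ^+ 2) = fun=> 0); last first.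
  by apply/funext => k; rewrite subrr expr0n.
rewrite (_ : series (fun=> 0) = fun=> 0); last first.
  by apply/funext => N; rewrite /series /= big1.
by rewrite lim_cst // sqrtr0.
Qed.

(* K0 is bounded in l_2: it lies within distance 1 of the convex hull of
   [ball_gens], whose square sums are bounded by 4 (Jensen). *)
Lemma K0_sumsq {w} : K0 R w -> forall N, sumsq w N <= 10.
Proof.
move=> [w_l2 w_close] N.
have [y [y_conv wy_lt1]] := w_close 1 ltr01.
have y_le := conv_sumsq ball_gens y_conv (@ball_gens_sumsq).
have [wy_cvg _] := l2_dominated (fun k => w k - y k) w_l2 y_le
  (fun k => sqrB_le (w k) (y k)).
rewrite /l2norm sqrt_lt1 in wy_lt1.
have wy_le := sumsq_le_lim wy_cvg N.
have : sumsq w N <= 2 * sumsq (fun k => w k - y k) N + 2 * sumsq y N.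
  by apply: sumsq_le2 => k; rewrite -{1}(subrK (y k) (w k)); exact: sqrD_le.
have := y_le N; lra.
Qed.

(* Every l_2 vector has a positive multiple in the l_2 unit ball, hence in K0;
   so the Minkowski functional [norm0] is an infimum over a nonempty set. *)
Lemma K0_absorbing {x} : l2 R x -> exists2 t, 0 < t & K0 R (fun k => t^-1 * x k).
Proof.
move=> x_l2; set t := limn (sumsq x) + 1.
have t_gt0 : 0 < t by have := lim_sumsq_ge0 x_l2; rewrite /t; lra.
exists t => //.
have tx_le1 N : series (fun k => (t^-1 * x k) ^+ 2) N <= 1.
  rewrite sumsq_scale exprVn ler_pdivrMl ?exprn_gt0 // mulr1.
  have := sumsq_le_lim x_l2 N; have := lim_sumsq_ge0 x_l2; rewrite /t; nra.
have [tx_l2 tx_lim] := bounded_series_cvg (fun k => sqr_ge0 (t^-1 * x k)) tx_le1.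
by apply: gens_in_K0 => //; left; split => //; rewrite /l2norm sqrt_le1.
Qed.

(* The unit ball of Y is bounded in l_2: |||x||| <= 1 gives ||x|| < 2. *)
Lemma BY_sumsq {x} : BY R x -> forall N, sumsq x N <= 40.
Proof.
move=> [x_l2 x_tn] N.
have n0_le1 : norm0 R x <= 1 by move: x_tn; rewrite /tnorm ge_max => /andP[].
set E := [set t : R | 0 < t /\ K0 R (fun k => t^-1 * x k)].
have E_n0 : E !=set0 by have [t t_gt0 tK] := K0_absorbing x_l2; exists t.
have : inf E < 2 by apply: le_lt_trans n0_le1 _; lra.
case/(inf_lt E_n0) => t [t_gt0 tK] t_lt2.
have := K0_sumsq tK N; rewrite sumsq_scale => tx_le.
have -> : sumsq x N = t ^+ 2 * (t^-1 ^+ 2 * sumsq x N).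
  by rewrite mulrA -exprMn mulfV ?gt_eqF // expr1n mul1r.
have := series_ge0 N (fun k => sqr_ge0 (x k)); nra.
Qed.

Lemma BY_diff_coord {x m} : BY R x -> (1 <= m)%N -> `|x 0%N - 2 * x m| <= 1.
Proof.
move=> [x_l2 x_tn] m_ge1.
set E := [set `|x 0%N - 2 * x n| | n in [set n : nat | (1 <= n)%N]].
have E_le1 : sup E <= 1 by move: x_tn; rewrite /tnorm ge_max => /andP[].
apply: le_trans E_le1; apply: sup_upper_bound; last by exists m.
split; first by exists `|x 0%N - 2 * x 1%N|; exists 1%N.
exists (`|x 0%N| + 2 * (1 + limn (sumsq x))) => _ [n _ <-].
apply: le_trans (ler_normB _ _) _; rewrite normrM ger0_norm // lerD2l ler_pM2l //.
have := l2_coord_sqr n x_l2; rewrite -(real_normK (num_real (x n))).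
have := normr_ge0 (x n); nra.
Qed.

(* Since x_n -> 0, the previous bound also forces |x_1| <= 1. *)
Lemma BY_first_coord {x} : BY R x -> `|x 0%N| <= 1.
Proof.
move=> x_BY; have [x_l2 _] := x_BY.
rewrite leNgt; apply/negP => x0_gt1.
set e := (`|x 0%N| - 1) / 2.
have e_gt0 : 0 < e by rewrite /e; lra.
have [M _ xM] := cvgr0_norm_lt _ (cvg_series_cvg_0 x_l2) (e ^+ 2) (exprn_gt0 _ e_gt0).
have := xM M.+1 (leqnSn M).
rewrite /= ger0_norm ?sqr_ge0 // -(real_normK (num_real (x M.+1))) => xM_small.
have := BY_diff_coord x_BY (ltn0Sn M).
have : `|x 0%N| <= `|x 0%N - 2 * x M.+1| + `|2 * x M.+1|.
  by rewrite -{1}(subrK (2 * x M.+1) (x 0%N)); exact: ler_normD.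
rewrite normrM (ger0_norm (_ : 0 <= 2)) //.
have := normr_ge0 (x M.+1); rewrite /e in e_gt0 xM_small *; nra.
Qed.

Lemma BY_coords {x} : BY R x ->
  x 0%N <= 1 /\ (x 0%N = 1 -> forall k, (1 <= k)%N -> 0 <= x k <= 1).
Proof.
move=> x_BY; split; first by have := BY_first_coord x_BY; rewrite ler_norml => /andP[].
move=> x0 k k_ge1; have := BY_diff_coord x_BY k_ge1.
by rewrite x0 ler_norml => /andP[? ?]; apply/andP; split; lra.
Qed.

Lemma BY_mem {v} : l2 R v -> ball_gens v ->
  (forall n, (1 <= n)%N -> `|v 0%N - 2 * v n| <= 1) -> BY R v.
Proof.
move=> v_l2 v_gen v_diff; split => //; rewrite /tnorm ge_max; apply/andP; split.
  rewrite /norm0; apply: ge_inf; first by exists 0 => t [t_gt0 _]; exact: ltW.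
  split; first exact: ltr01.
  rewrite invr1 (_ : (fun k => 1 * v k) = v); last by apply/funext => k; rewrite mul1r.
  exact: gens_in_K0.
apply: ge_sup; first by exists `|v 0%N - 2 * v 1%N|; exists 1%N.
by move=> _ [n n_ge1 <-]; exact: v_diff.
Qed.

End UnitBalls.

Section Duality.
Context {R : realType}.
Implicit Types f g x : nat -> R.

(* Polarization: the pairing of an l_2 sequence with a point of B_Y converges
   and is bounded, since B_Y is bounded in l_2. *)
Lemma pairing_bound {g x} : l2 R g -> BY R x ->
  `|pairing R g x| <= limn (sumsq g) + 40.
Proof.
move=> g_l2 x_BY; have x_le := BY_sumsq x_BY.
have [cvgP limP] := l2_dominated (fun k => g k + x k) g_l2 x_le
  (fun k => sqrD_le (g k) (x k)).
have [cvgM limM] := l2_dominated (fun k => g k - x k) g_l2 x_le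
  (fun k => sqrB_le (g k) (x k)).
have P_ge0 := lim_sumsq_ge0 cvgP; have M_ge0 := lim_sumsq_ge0 cvgM.
rewrite /pairing (_ : (fun k => g k * x k) =
   4^-1 *: ((fun k => (g k + x k) ^+ 2) - (fun k => (g k - x k) ^+ 2))); last first.
  apply/funext => k; rewrite !fctE.
  by rewrite [RHS](_ : _ = 4^-1 * ((g k + x k) ^+ 2 - (g k - x k) ^+ 2)) //; field.
rewrite (lim_seriesZ _ (is_cvg_seriesB cvgP cvgM)) (lim_seriesB cvgP cvgM).
rewrite normrM ger0_norm ?invr_ge0 //.
have := ler_normB (limn (sumsq (fun k => g k + x k))) (limn (sumsq (fun k => g k - x k))).
by rewrite (ger0_norm P_ge0) (ger0_norm M_ge0); lra.
Qed.

Lemma pairing_le_dualnorm {g x} : l2 R g -> BY R x ->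
  `|pairing R g x| <= dualnorm R g.
Proof.
move=> g_l2 x_BY; apply: sup_upper_bound; last by exists x.
split; first by exists `|pairing R g x|; exists x.
by exists (limn (sumsq g) + 40) => _ [y y_BY <-]; exact: pairing_bound.
Qed.

Lemma pairingC f x : pairing R f x = pairing R x f.
Proof.
by rewrite /pairing (_ : (fun k => f k * x k) = (fun k => x k * f k)) //;
  apply/funext => k; exact: mulrC.
Qed.

Lemma pairing_two_point {g v} (a b : R) {m} : (1 <= m)%N ->
  (forall k, v k = a * unitv R 0 k + b * unitv R m k) ->
  pairing R g v = a * g 0%N + b * g m.
Proof.
move=> m_ge1 vE.
have gv_out k : (m < k)%N -> g k * v k = 0.
  by move=> mk; rewrite vE !unitv_out ?(mulr0, addr0) //; exact: leq_trans mk.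
rewrite /pairing (finite_support_series _ _ gv_out).2 /series /=.
rewrite (eq_bigr (fun k => a * (g k * (k == 0)%:R) + b * (g k * (k == m)%:R)));
  last by move=> k _; rewrite vE /unitv; ring.
by rewrite big_split /= -!mulr_sumr !sum_delta ltnS leqnn !mul1r.
Qed.

Lemma pairing_e1 g : pairing R g (unitv R 0) = g 0%N.
Proof.
rewrite (pairing_two_point 1 0 (leqnn 1)); last by move=> k; rewrite mul1r mul0r addr0.
by rewrite mul1r mul0r addr0.
Qed.

Lemma BY_e1 : BY R (unitv R 0).
Proof.
have e1_l2 : l2 R (unitv R 0) by apply: (finite_support_l2 1) => k; exact: unitv_out.
apply: BY_mem => //.
  left; split => //; rewrite /l2norm (finite_support_series _ 1 _).2; last first.
    by move=> k k_gt0; rewrite unitv_out // expr0n.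
  by rewrite /series /= big_nat1 unitv_diag expr1n sqrtr1.
by move=> n n_ge1; rewrite unitv_diag unitv_out // mulr0 subr0 normr1.
Qed.

Lemma BY_e1_en {m} : (1 <= m)%N -> BY R (fun k => unitv R 0 k + unitv R m k).
Proof.
move=> m_ge1; apply: BY_mem.
- apply: (finite_support_l2 m.+1) => k mk.
  by rewrite !unitv_out ?addr0 //; exact: leq_trans mk.
- by right; exists m; split => //; left.
move=> n n_ge1; rewrite /unitv eqxx (gtn_eqF n_ge1) (ltn_eqF m_ge1) /= addr0 add0r.
case: (n == m) => /=; rewrite ?mulr1 ?mulr0 ?subr0 ?normr1 //.
by rewrite (_ : 1 - 2 = -1 :> R) ?normrN ?normr1 //; lra.
Qed.

Lemma BYs_mem f : l2 R f -> (forall x, BY R x -> `|pairing R f x| <= 1) -> BYs R f.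
Proof.
move=> f_l2 f_le1; split => //; apply: ge_sup.
  by exists `|pairing R f (unitv R 0)|; exists (unitv R 0) => //; exact: BY_e1.
by move=> _ [x x_BY <-]; exact: f_le1.
Qed.

Lemma BYs_coords g : BYs R g ->
  g 0%N <= 1 /\ forall k, (1 <= k)%N -> - 1 <= g 0%N + g k <= 1.
Proof.
move=> [g_l2 g_le1].
have test x : BY R x -> `|pairing R g x| <= 1.
  by move=> x_BY; apply: le_trans g_le1; exact: pairing_le_dualnorm.
split.
  by have := test _ BY_e1; rewrite pairing_e1 ler_norml => /andP[].
move=> k k_ge1; have := test _ (BY_e1_en k_ge1).
rewrite (pairing_two_point 1 1 k_ge1); last by move=> j; rewrite !mul1r.
by rewrite !mul1r ler_norml.
Qed.

End Duality.

Section Extremality.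
Context {R : realType}.

Lemma convex_pinned_above {t a b c : R} : 0 < t < 1 -> a <= c -> b <= c ->
  c = t * a + (1 - t) * b -> a = c /\ b = c.
Proof.
move=> /andP[t_gt0 t_lt1] a_le b_le cE.
have ta_ge0 : 0 <= t * (c - a) by apply: mulr_ge0; lra.
have tb_ge0 : 0 <= (1 - t) * (c - b) by apply: mulr_ge0; lra.
have sum0 : t * (c - a) + (1 - t) * (c - b) = 0 by rewrite cE; ring.
have /eqP : t * (c - a) = 0 by lra.
rewrite mulf_eq0 (gt_eqF t_gt0) subr_eq0 => /eqP ca.
have /eqP : (1 - t) * (c - b) = 0 by lra.
rewrite mulf_eq0 subr_eq0 eq_sym (lt_eqF t_lt1) subr_eq0 => /eqP cb.
by split.
Qed.

Lemma convex_pinned_below {t a b c : R} : 0 < t < 1 -> c <= a -> c <= b ->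
  c = t * a + (1 - t) * b -> a = c /\ b = c.
Proof.
move=> t01 a_ge b_ge cE.
have [] := convex_pinned_above t01 (_ : - a <= - c) (_ : - b <= - c)
  (_ : - c = t * - a + (1 - t) * - b).
- by rewrite lerN2.
- by rewrite lerN2.
- by rewrite cE; ring.
by move=> /oppr_inj -> /oppr_inj ->.
Qed.

Lemma extreme_by_coordinate_bounds {C : set (nat -> R)} {x} (above : nat -> bool) :
  C x -> (forall y, C y -> y 0%N <= x 0%N) ->
  (forall y, C y -> y 0%N = x 0%N -> forall k, (1 <= k)%N ->
     if above k then y k <= x k else x k <= y k) ->
  extreme R C x.
Proof.
move=> Cx x0_max x_face; split => // y z t Cy Cz t01 xE.
have xk k : x k = t * y k + (1 - t) * z k by rewrite xE.
have [y0 z0] := convex_pinned_above t01 (x0_max _ Cy) (x0_max _ Cz) (xk 0%N).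
apply/funext => k; case: (posnP k) => [->|k_gt0]; first by rewrite y0 z0.
have := x_face _ Cy y0 _ k_gt0; have := x_face _ Cz z0 _ k_gt0.
case: (above k) => zk yk.
- by have [-> ->] := convex_pinned_above t01 yk zk (xk k).
- by have [-> ->] := convex_pinned_below t01 yk zk (xk k).
Qed.

Lemma extreme_e1 : extreme R (BY R) (unitv R 0).
Proof.
apply: (extreme_by_coordinate_bounds (fun=> false)); first exact: BY_e1.
  by move=> y /BY_coords[y0_le1 _]; rewrite unitv_diag.
move=> y /BY_coords[_ y_face]; rewrite unitv_diag => y0 k k_ge1.
by rewrite unitv_out //; have /andP[] := y_face y0 k k_ge1.
Qed.

Lemma extreme_e1_en n : (1 <= n)%N ->
  extreme R (BY R) (fun k => unitv R 0 k + unitv R n k).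
Proof.
move=> n_ge1.
have x0 : unitv R 0 0 + unitv R n 0 = 1 by rewrite /unitv eqxx (ltn_eqF n_ge1) addr0.
apply: (extreme_by_coordinate_bounds (fun k => k == n)); first exact: BY_e1_en.
  by move=> y /BY_coords[y0_le1 _]; rewrite x0.
move=> y /BY_coords[_ y_face]; rewrite x0 => y0 k k_ge1.
have /andP[yk_ge0 yk_le1] := y_face y0 k k_ge1.
rewrite /unitv (gtn_eqF k_ge1) add0r; by case: (k == n).
Qed.

Lemma extreme_dual_e1 : extreme R (BYs R) (unitv R 0).
Proof.
apply: (extreme_by_coordinate_bounds (fun=> true)).
- apply: BYs_mem; first by apply: (finite_support_l2 1) => k; exact: unitv_out.
  by move=> x x_BY; rewrite pairingC pairing_e1; exact: BY_first_coord.
- by move=> g /BYs_coords[g0_le1 _]; rewrite unitv_diag.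
move=> g /BYs_coords[_ g_face]; rewrite unitv_diag => g0 k k_ge1.
have /andP[_] := g_face k k_ge1; rewrite g0 unitv_out //; lra.
Qed.

Lemma extreme_dual_e1_en n : (1 <= n)%N ->
  extreme R (BYs R) (fun k => unitv R 0 k - 2 * unitv R n k).
Proof.
move=> n_ge1.
have f0 : unitv R 0 0 - 2 * unitv R n 0 = 1.
  by rewrite /unitv eqxx (ltn_eqF n_ge1) mulr0 subr0.
apply: (extreme_by_coordinate_bounds (fun k => k != n)).
- apply: BYs_mem.
    apply: (finite_support_l2 n.+1) => k nk.
    by rewrite !unitv_out ?mulr0 ?subr0 //; exact: leq_trans nk.
  move=> x x_BY; rewrite pairingC (pairing_two_point 1 (-2) n_ge1); last first.
    by move=> k; rewrite mul1r mulNr.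
  by rewrite mul1r mulNr; exact: BY_diff_coord.
- by move=> g /BYs_coords[g0_le1 _]; rewrite f0.
move=> g /BYs_coords[_ g_face]; rewrite f0 => g0 k k_ge1.
have /andP[gk_ge gk_le] := g_face k k_ge1; rewrite g0 in gk_ge gk_le.
by rewrite /unitv (gtn_eqF k_ge1) sub0r; case: (k == n) => /=; lra.
Qed.

End Extremality.

Theorem proposition3p5 (R : realType) :
  extreme R (BY R) (unitv R 0) /\
  (forall n : nat, (1 <= n)%N ->
     extreme R (BY R) (fun k => unitv R 0 k + unitv R n k)) /\
  extreme R (BYs R) (unitv R 0) /\
  (forall n : nat, (1 <= n)%N ->
     extreme R (BYs R) (fun k => unitv R 0 k - 2 * unitv R n k)).
Proof.
split; first exact: extreme_e1.
split; first exact: extreme_e1_en.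
split; first exact: extreme_dual_e1.
exact: extreme_dual_e1_en.
Qed.
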